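(* Let $M:=\mathbb R^2\setminus\{(0,0)\}$ and let $\varphi:M\to M$ be the homeomorphism $$\varphi(x,y)=\begin{cases}\big(x,\,(1-\tfrac{e^{-1/x}}{x})(2y-x)+e^{-1/x}\big)&\text{if }0\le\tfrac12x\le y\le x,\\ \big(x,\,\tfrac{2e^{-1/x}}{x}\,y\big)&\text{if }0\le y\le\tfrac12x,\\ (x,y)&\text{if }y\le0\text{ or }x\le y.\end{cases}$$ Then $\varphi$ does not extend to a homeomorphism $\beta_s^*M\to\beta_s^*M$.
   Context: $\mathcal S^*(M)$ is the ring of bounded continuous semialgebraic functions on $M$; $\beta_s^*M$ is the set of its maximal ideals with the Zariski topology (compact Hausdorff), and $M$ is identified with a dense subspace via $a\mapsto\{f\in\mathcal S^*(M):f(a)=0\}$. ''Extends'' means a homeomorphism of $\beta_s^*M$ whose restriction to $M$ is $\varphi$. *)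

From Stdlib Require Import Reals.
Open Scope R_scope.

Inductive rpoly : Type :=
| PVar : nat -> rpoly
| PConst : R -> rpoly
| PAdd : rpoly -> rpoly -> rpoly
| PMul : rpoly -> rpoly -> rpoly
| POpp : rpoly -> rpoly.

Fixpoint peval (env : nat -> R) (p : rpoly) : R :=
  match p with
  | PVar i => env i
  | PConst c => c
  | PAdd p q => peval env p + peval env q
  | PMul p q => peval env p * peval env q
  | POpp p => - peval env p
  end.

(** Quantifier-free sign conditions: semialgebraic sets are exactly the
    finite boolean combinations of sets {p > 0} and {p = 0}. *)
Inductive sa_formula : Type :=
| FPos : rpoly -> sa_formula
| FZero : rpoly -> sa_formula
| FAnd : sa_formula -> sa_formula -> sa_formula
| FOr : sa_formula -> sa_formula -> sa_formula
| FNot : sa_formula -> sa_formula.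

Fixpoint fholds (env : nat -> R) (F : sa_formula) : Prop :=
  match F with
  | FPos p => 0 < peval env p
  | FZero p => peval env p = 0
  | FAnd F G => fholds env F /\ fholds env G
  | FOr F G => fholds env F \/ fholds env G
  | FNot F => ~ fholds env F
  end.

Definition env3 (x y z : R) : nat -> R :=
  fun i => match i with 0%nat => x | 1%nat => y | 2%nat => z | _ => 0 end.

Definition semialgebraic3 (S : R -> R -> R -> Prop) : Prop :=
  exists F : sa_formula, forall x y z, fholds (env3 x y z) F <-> S x y z.

Definition inM (p : R * R) : Prop := p <> (0, 0).

(** Bounded continuous semialgebraic functions on M (values off M irrelevant). *)
Definition sa_bounded (f : R * R -> R) : Prop :=
  exists B, forall p, inM p -> Rabs (f p) <= B.

Definition sa_continuous (f : R * R -> R) : Prop :=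
  forall p, inM p -> forall eps, 0 < eps -> exists delta, 0 < delta /\
    forall q, inM q ->
      (fst q - fst p)^2 + (snd q - snd p)^2 < delta^2 ->
      Rabs (f q - f p) < eps.

Definition sa_function (f : R * R -> R) : Prop :=
  semialgebraic3 (fun x y z => inM (x, y) /\ z = f (x, y)).

Definition is_Sstar (f : R * R -> R) : Prop :=
  sa_bounded f /\ sa_continuous f /\ sa_function f.

(** The ring S^*(M) (elements considered via their values on M). *)
Definition SM : Type := { f : R * R -> R | is_Sstar f }.

Definition ev (f : SM) (p : R * R) : R := proj1_sig f p.

Definition is_ideal (I : SM -> Prop) : Prop :=
  (forall z : SM, (forall p, inM p -> ev z p = 0) -> I z) /\
  (forall f g h : SM, I f -> I g ->
     (forall p, inM p -> ev h p = ev f p + ev g p) -> I h) /\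
  (forall f g h : SM, I f ->
     (forall p, inM p -> ev h p = ev g p * ev f p) -> I h).

Definition is_proper (I : SM -> Prop) : Prop :=
  forall u : SM, (forall p, inM p -> ev u p = 1) -> ~ I u.

Definition is_maximal_ideal (I : SM -> Prop) : Prop :=
  is_ideal I /\ is_proper I /\
  forall J : SM -> Prop, is_ideal J -> is_proper J ->
    (forall f, I f -> J f) -> forall f, J f -> I f.

(** beta_s^* M : maximal spectrum of S^*(M). *)
Definition betaM : Type := { I : SM -> Prop | is_maximal_ideal I }.

Definition mem (m : betaM) (f : SM) : Prop := proj1_sig m f.

(** Zariski topology: basic open sets D(f) = {m | f not in m}. *)
Definition Dset (f : SM) (m : betaM) : Prop := ~ mem m f.

Definition zar_open (U : betaM -> Prop) : Prop :=
  forall m, U m -> exists f, Dset f m /\ forall m', Dset f m' -> U m'.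

Definition zar_continuous (F : betaM -> betaM) : Prop :=
  forall U, zar_open U -> zar_open (fun m => U (F m)).

Definition zar_homeomorphism (F : betaM -> betaM) : Prop :=
  exists G : betaM -> betaM,
    (forall m, G (F m) = m) /\ (forall m, F (G m) = m) /\
    zar_continuous F /\ zar_continuous G.

Definition phi (p : R * R) : R * R :=
  let (x, y) := p in
  if Rle_dec y 0 then (x, y)
  else if Rle_dec x y then (x, y)
  else if Rle_dec y (x / 2) then (x, 2 * exp (- / x) / x * y)
  else (x, (1 - exp (- / x) / x) * (2 * y - x) + exp (- / x)).

(** F extends phi: F maps the maximal ideal m_a = {f | f(a) = 0} of a point
    a in M to m_{phi(a)}. *)
Definition extends_phi (F : betaM -> betaM) : Prop :=
  forall a, inM a -> forall m : betaM,
    (forall f, mem m f <-> ev f a = 0) ->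
    forall f, mem (F m) f <-> ev f (phi a) = 0.

From Stdlib Require Import Reals Ranalysis5 Lra Lia Psatz List Classical
  FunctionalExtensionality PropExtensionality ProofIrrelevance.
From Coquelicot Require Import Coquelicot.
Import ListNotations.
Open Scope R_scope.

(* Let [G] be the inverse of an extension of phi and [m] the maximal ideal of
   the functions tending to [0] along the positive x-axis. The point [m] is
   adherent to the axis, and also to the flat curve [y = exp (-1/x)]: a
   semialgebraic function that vanishes on the curve but tends to [l <> 0]
   along the axis would take the value [l / 2] on the vertical segment below
   the curve without taking it at the top, whereas for small [x] the atoms of
   its graph formula, being polynomials in [x] and [y], vanish identically or
   nowhere on such segments, because the curve is flatter than any power of
   [x]. As phi fixes the axis and maps the line [y = x / 2] onto the flat
   curve, [G m] is adherent to the axis and to that line. The function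
   [5 y^2 / (x^2 + y^2)] is [0] on the first and [1] on the second, so it lies
   in [G m] together with [1] minus it, which is absurd. *)

Section ListPoly.
Variables (A : Type) (zero : A) (add mul : A -> A -> A) (val : A -> R).

Fixpoint ladd (p q : list A) : list A :=
  match p, q with
  | [], _ => q
  | _, [] => p
  | a :: p', b :: q' => add a b :: ladd p' q'
  end.

Fixpoint lmul (p q : list A) : list A :=
  match p with
  | [] => []
  | a :: p' => ladd (map (mul a) q) (zero :: lmul p' q)
  end.

Fixpoint leval (p : list A) (t : R) : R :=
  match p with [] => 0 | a :: p' => val a + t * leval p' t end.

Hypothesis val_zero : val zero = 0.
Hypothesis val_add : forall a b, val (add a b) = val a + val b.
Hypothesis val_mul : forall a b, val (mul a b) = val a * val b.

Lemma leval_add p q t : leval (ladd p q) t = leval p t + leval q t.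
Proof.
  revert q; induction p as [|a p IH]; intros [|b q]; simpl; try ring.
  rewrite val_add, IH; ring.
Qed.

Lemma leval_map_mul a q t : leval (map (mul a) q) t = val a * leval q t.
Proof. induction q as [|b q IH]; simpl; [ring|]. rewrite val_mul, IH; ring. Qed.

Lemma leval_mul p q t : leval (lmul p q) t = leval p t * leval q t.
Proof.
  induction p as [|a p IH]; simpl; [ring|].
  rewrite leval_add, leval_map_mul; simpl; rewrite val_zero, IH; ring.
Qed.

Lemma leval_abs_le (bnd : A -> R) p t :
  (forall a, Rabs (val a) <= bnd a) -> Rabs t <= 1 ->
  Rabs (leval p t) <= fold_right (fun a s => bnd a + s) 0 p.
Proof.
  intros Hbnd Ht; induction p as [|a p IH]; simpl.
  - rewrite Rabs_R0; lra.
  - eapply Rle_trans; [apply Rabs_triang|]; rewrite Rabs_mult.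
    pose proof (Hbnd a); pose proof (Rabs_pos t); pose proof (Rabs_pos (leval p t)).
    nra.
Qed.

End ListPoly.

Arguments ladd {A}.
Arguments lmul {A}.
Arguments leval {A}.

(* A polynomial [sum_j y^j p_j(x)] is stored as the list of the coefficient
   lists of the [p_j]. *)
Definition ueval (p : list R) (x : R) : R := leval (fun a => a) p x.
Definition beval (P : list (list R)) (x y : R) : R := leval (fun p => ueval p x) P y.

Definition badd : list (list R) -> list (list R) -> list (list R) :=
  ladd (ladd Rplus).
Definition bmul : list (list R) -> list (list R) -> list (list R) :=
  lmul [] (ladd Rplus) (lmul 0 Rplus Rmult).

Lemma ueval_add p q x : ueval (ladd Rplus p q) x = ueval p x + ueval q x.
Proof. now apply leval_add. Qed.

Lemma ueval_mul p q x : ueval (lmul 0 Rplus Rmult p q) x = ueval p x * ueval q x.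
Proof. now apply leval_mul. Qed.

Lemma beval_add P Q x y : beval (badd P Q) x y = beval P x y + beval Q x y.
Proof. apply leval_add; intros; apply ueval_add. Qed.

Lemma beval_mul P Q x y : beval (bmul P Q) x y = beval P x y * beval Q x y.
Proof. apply leval_mul; [reflexivity| intros; apply ueval_add| intros; apply ueval_mul]. Qed.

Lemma ueval_bounded p : exists K, 0 <= K /\
  forall x, Rabs x <= 1 -> Rabs (ueval p x) <= K.
Proof.
  assert (H : forall x, Rabs x <= 1 ->
    Rabs (ueval p x) <= fold_right (fun a s => Rabs a + s) 0 p).
  { intros x Hx; apply leval_abs_le; [intros; apply Rle_refl| exact Hx]. }
  eexists; split; [|exact H].
  eapply Rle_trans; [apply Rabs_pos| apply (H 0); rewrite Rabs_R0; lra].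
Qed.

Lemma beval_bounded P : exists K, 0 <= K /\
  forall x y, Rabs x <= 1 -> Rabs y <= 1 -> Rabs (beval P x y) <= K.
Proof.
  set (K := fold_right (fun p s => fold_right (fun a s => Rabs a + s) 0 p + s) 0 P).
  assert (H : forall x y, Rabs x <= 1 -> Rabs y <= 1 -> Rabs (beval P x y) <= K).
  { intros x y Hx Hy; apply leval_abs_le; [|exact Hy].
    intros p; apply leval_abs_le; [intros; apply Rle_refl| exact Hx]. }
  exists K; split; [|exact H].
  eapply Rle_trans; [apply Rabs_pos| apply (H 0 0); rewrite Rabs_R0; lra].
Qed.

Definition bvar (c : R) (i : nat) : list (list R) :=
  match i with
  | 0%nat => [[0; 1]]
  | 1%nat => [[]; [1]]
  | 2%nat => [[c]]
  | _ => []
  end.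

Fixpoint to_bpoly (c : R) (P : rpoly) : list (list R) :=
  match P with
  | PVar i => bvar c i
  | PConst r => [[r]]
  | PAdd p q => badd (to_bpoly c p) (to_bpoly c q)
  | PMul p q => bmul (to_bpoly c p) (to_bpoly c q)
  | POpp p => bmul [[-1]] (to_bpoly c p)
  end.

Lemma beval_to_bpoly c P x y : beval (to_bpoly c P) x y = peval (env3 x y c) P.
Proof.
  induction P as [i|r|p IHp q IHq|p IHp q IHq|p IHp]; cbn [peval to_bpoly].
  - destruct i as [|[|[|i]]]; cbv [beval ueval leval bvar env3]; ring.
  - cbv [beval ueval leval]; ring.
  - now rewrite beval_add, IHp, IHq.
  - now rewrite beval_mul, IHp, IHq.
  - rewrite beval_mul, IHp; cbv [beval ueval leval]; ring.
Qed.

Definition near0 (P : R -> Prop) : Prop :=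
  exists d, 0 < d /\ forall x, 0 < x < d -> P x.

Lemma near0_lt d : 0 < d -> near0 (fun x => x < d).
Proof. intros Hd; exists d; split; [exact Hd| tauto]. Qed.

Lemma near0_impl (P Q : R -> Prop) :
  near0 P -> (forall x, 0 < x -> P x -> Q x) -> near0 Q.
Proof. intros [d [Hd H]] HPQ; exists d; split; [exact Hd|]; intros x Hx; apply HPQ, H; tauto. Qed.

Lemma near0_and (P Q : R -> Prop) : near0 P -> near0 Q -> near0 (fun x => P x /\ Q x).
Proof.
  intros [d1 [Hd1 H1]] [d2 [Hd2 H2]]; exists (Rmin d1 d2); split.
  - now apply Rmin_glb_lt.
  - intros x [Hx Hxd]; pose proof (Rmin_l d1 d2); pose proof (Rmin_r d1 d2).
    split; [apply H1| apply H2]; lra.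
Qed.

Lemma near0_witness (P : R -> Prop) : near0 P -> exists x, 0 < x /\ P x.
Proof. intros [d [Hd H]]; exists (d / 2); split; [lra| apply H; lra]. Qed.

Lemma common_radius {A} (Q : R -> A -> Prop) (l : list A) :
  (forall d d' a, 0 < d' <= d -> Q d a -> Q d' a) ->
  (forall a, In a l -> exists d, 0 < d /\ Q d a) ->
  exists d, 0 < d /\ forall a, In a l -> Q d a.
Proof.
  intros Hmono Hex; induction l as [|a l IH].
  - exists 1; split; [lra| intros _ []].
  - destruct IH as [d1 [Hd1 H1]]; [intros; apply Hex; now right|].
    destruct (Hex a (or_introl eq_refl)) as [d2 [Hd2 H2]].
    assert (Hm : 0 < Rmin d1 d2) by now apply Rmin_glb_lt.
    exists (Rmin d1 d2); split; [exact Hm|]; intros b [<-|Hb].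
    + apply Hmono with d2; [split; [exact Hm| apply Rmin_r]| exact H2].
    + apply Hmono with d1; [split; [exact Hm| apply Rmin_l]| now apply H1].
Qed.

Lemma near0_all {A} (P : A -> R -> Prop) (l : list A) :
  (forall a, In a l -> near0 (P a)) -> near0 (fun x => forall a, In a l -> P a x).
Proof.
  intros H; destruct (common_radius (fun d a => forall x, 0 < x < d -> P a x) l)
    as [d [Hd Hall]]; [| exact H |].
  - intros d d' a Hd' Ha x Hx; apply Ha; lra.
  - exists d; split; [exact Hd|]; intros x Hx a Ha; now apply Hall.
Qed.

Definition flat (x : R) : R := exp (- / x).

Lemma flat_pos x : 0 < flat x.
Proof. apply exp_pos. Qed.

Lemma flat_le1 x : 0 < x -> flat x <= 1.
Proof.
  intros Hx; unfold flat; rewrite <- exp_0; left; apply exp_increasing.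
  pose proof (Rinv_0_lt_compat x Hx); lra.
Qed.

Lemma exp_ge_pow n t : 0 < t -> (t / INR (S n)) ^ S n <= exp t.
Proof.
  intros Ht; assert (HN : 0 < INR (S n)) by (apply lt_0_INR; lia).
  set (u := t / INR (S n)); assert (Hu : 0 < u) by (apply Rdiv_lt_0_compat; lra).
  replace t with (INR (S n) * u) by (unfold u; field; lra).
  assert (Hpow : forall k, exp (INR k * u) = exp u ^ k).
  { induction k as [|k IH]; [simpl; now rewrite Rmult_0_l, exp_0|].
    rewrite S_INR, Rmult_plus_distr_r, Rmult_1_l, exp_plus, IH; simpl; ring. }
  rewrite Hpow; apply pow_incr; split; [lra|].
  pose proof (exp_ineq1_le u); lra.
Qed.

Lemma flat_lt_pow k m : 0 < k -> near0 (fun x => flat x < k * x ^ m).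
Proof.
  intros Hk; set (N := INR (S m)); assert (HN : 0 < N) by (apply lt_0_INR; lia).
  assert (HNN : 0 < N ^ S m) by (apply pow_lt; lra).
  apply near0_impl with (fun x => x < k / N ^ S m); [apply near0_lt, Rdiv_lt_0_compat; lra|].
  intros x Hx Hxd; assert (Hxm : 0 < x ^ m) by (apply pow_lt; lra).
  (* [exp (1/x) >= (1/(N x))^N] gives [flat x <= N^N x^(m+1)]. *)
  assert (Hflat : flat x <= N ^ S m * x * x ^ m).
  { replace (N ^ S m * x * x ^ m) with (/ (/ x / N) ^ S m)
      by (rewrite <- pow_inv; replace (/ (/ x / N)) with (N * x) by (field; lra);
          rewrite Rpow_mult_distr; simpl; ring).
    unfold flat; rewrite exp_Ropp; apply Rinv_le_contravar.
    - apply pow_lt, Rdiv_lt_0_compat; [apply Rinv_0_lt_compat|]; lra.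
    - apply exp_ge_pow, Rinv_0_lt_compat; lra. }
  assert (x * N ^ S m < k).
  { apply Rmult_lt_compat_r with (r := N ^ S m) in Hxd; [|lra].
    unfold Rdiv in Hxd; rewrite Rmult_assoc, Rinv_l in Hxd; lra. }
  nra.
Qed.

Lemma ueval_tame p :
  near0 (fun x => ueval p x = 0) \/
  exists k m, 0 < k /\ near0 (fun x => k * x ^ m <= Rabs (ueval p x)).
Proof.
  induction p as [|a p IH].
  - left; exists 1; split; [lra| reflexivity].
  - change (ueval (a :: p)) with (fun x => a + x * ueval p x).
    destruct (Req_dec a 0) as [->|Ha].
    + destruct IH as [IH|[k [m [Hk IH]]]]; [left| right; exists k, (S m); split; [exact Hk|]];
        (apply near0_impl with (1 := IH); intros x Hx H).
      * rewrite H; ring.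
      * rewrite Rplus_0_l, Rabs_mult, (Rabs_pos_eq x) by lra; simpl; nra.
    + (* the constant term dominates: [|a + x q(x)| >= |a| - x K >= |a|/2] *)
      right; destruct (ueval_bounded p) as [K [HK HKb]].
      assert (Haa : 0 < Rabs a) by now apply Rabs_pos_lt.
      exists (Rabs a / 2), 0%nat; split; [lra|].
      apply near0_impl with (fun x => x < 1 /\ x < Rabs a / (2 * (K + 1))).
      { apply near0_and; apply near0_lt; [lra| apply Rdiv_lt_0_compat; lra]. }
      intros x Hx [Hx1 Hx2]; simpl.
      assert (Hq := HKb x ltac:(rewrite Rabs_pos_eq; lra)).
      assert (x * (2 * (K + 1)) < Rabs a).
      { apply Rmult_lt_compat_r with (r := 2 * (K + 1)) in Hx2; [|lra].
        unfold Rdiv in Hx2; rewrite Rmult_assoc, Rinv_l in Hx2; lra. }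
      assert (Rabs (x * ueval p x) <= x * K)
        by (rewrite Rabs_mult, Rabs_pos_eq by lra; apply Rmult_le_compat_l; lra).
      assert (Htri := Rabs_triang_inv a (- (x * ueval p x))).
      rewrite Rabs_Ropp in Htri.
      replace (a - - (x * ueval p x)) with (a + x * ueval p x) in Htri by ring.
      nra.
Qed.

Definition sign_stable (g : R -> R) (I : R -> Prop) : Prop :=
  (forall t, I t -> g t = 0) \/ (forall t, I t -> g t <> 0).

Lemma ueval_sign_stable p : exists d, 0 < d /\ sign_stable (ueval p) (fun x => 0 < x < d).
Proof.
  destruct (ueval_tame p) as [[d [Hd H]]|[k [m [Hk [d [Hd H]]]]]];
    exists d; split; try exact Hd; [now left| right].
  intros x Hx H0; specialize (H x Hx); rewrite H0, Rabs_R0 in H.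
  assert (0 < x ^ m) by (apply pow_lt; lra); nra.
Qed.

(** Write [P(x, y) = p_0(x) + y Q(x, y)]. If [p_0] vanishes near [0], [P] and
    [Q] have the same zeros for [y > 0]; otherwise [|p_0(x)| >= k x^m] while
    [|y Q(x, y)| <= K flat x], which is smaller. *)
Lemma beval_sign_stable P :
  near0 (fun x => sign_stable (fun y => beval P x y) (fun y => 0 < y <= flat x)).
Proof.
  induction P as [|p P IH].
  - exists 1; split; [lra|]; intros; now left.
  - change (beval (p :: P)) with (fun x y => ueval p x + y * beval P x y).
    destruct (ueval_tame p) as [Hp|[k [m [Hk Hp]]]].
    + apply near0_impl with (1 := near0_and _ _ Hp IH); intros x Hx [H0 [HZ|HZ]]; rewrite H0.
      * left; intros y Hy; rewrite HZ by exact Hy; ring.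
      * right; intros y Hy; rewrite Rplus_0_l; apply Rmult_integral_contrapositive.
        split; [lra| now apply HZ].
    + destruct (beval_bounded P) as [K [HK HKb]].
      assert (Hflat := flat_lt_pow (k / (K + 1)) m ltac:(apply Rdiv_lt_0_compat; lra)).
      apply near0_impl with (1 := near0_and _ _ (near0_and _ _ Hp Hflat) (near0_lt 1 Rlt_0_1)).
      intros x Hx [[Hpx Hfx] Hx1]; right; intros y [Hy1 Hy2] Hsum.
      pose proof (flat_le1 x Hx).
      assert (Hb := HKb x y ltac:(rewrite Rabs_pos_eq; lra) ltac:(rewrite Rabs_pos_eq; lra)).
      assert (HKf : (K + 1) * flat x < k * x ^ m).
      { apply Rmult_lt_compat_l with (r := K + 1) in Hfx; [|lra].
        replace ((K + 1) * (k / (K + 1) * x ^ m)) with (k * x ^ m) in Hfx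
          by (field; lra).
        exact Hfx. }
      assert (Rabs (y * beval P x y) <= flat x * K).
      { rewrite Rabs_mult, Rabs_pos_eq by lra.
        apply Rmult_le_compat; [lra| apply Rabs_pos| lra| exact Hb]. }
      replace (ueval p x) with (- (y * beval P x y)) in Hpx by lra.
      rewrite Rabs_Ropp in Hpx; pose proof (flat_pos x); nra.
Qed.

Fixpoint atoms (F : sa_formula) : list rpoly :=
  match F with
  | FPos p | FZero p => [p]
  | FAnd F G | FOr F G => atoms F ++ atoms G
  | FNot F => atoms F
  end.

Definition same_sign (a b : R) : Prop := (0 < a <-> 0 < b) /\ (a = 0 <-> b = 0).

Lemma fholds_atoms F e e' :
  (forall P, In P (atoms F) -> same_sign (peval e P) (peval e' P)) ->
  (fholds e F <-> fholds e' F).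
Proof.
  induction F as [p|p|F IHF G IHG|F IHF G IHG|F IHF]; simpl; intros H.
  - apply (H p); now left.
  - apply (H p); now left.
  - rewrite IHF, IHG; [tauto| |]; intros; apply H, in_or_app; auto.
  - rewrite IHF, IHG; [tauto| |]; intros; apply H, in_or_app; auto.
  - rewrite IHF; tauto.
Qed.

Definition is_interval (I : R -> Prop) : Prop :=
  forall s t u, I s -> I u -> s <= t <= u -> I t.

Lemma pos_iff_of_nonvanishing (g : R -> R) (I : R -> Prop) :
  is_interval I -> (forall t, I t -> continuity_pt g t) -> (forall t, I t -> g t <> 0) ->
  forall t t', I t -> I t' -> (0 < g t <-> 0 < g t').
Proof.
  intros HI Hc Hnz.
  assert (Hord : forall t t', I t -> I t' -> t <= t' -> (0 < g t <-> 0 < g t')).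
  { intros t t' Ht Ht' Hle.
    assert (Hsub : forall s, t <= s <= t' -> I s) by (intros s Hs; exact (HI t s t' Ht Ht' Hs)).
    pose proof (Hnz t Ht); pose proof (Hnz t' Ht'); split; intros Hpos.
    - destruct (Rlt_or_le 0 (g t')) as [|Hneg]; [assumption| exfalso].
      destruct (IVT_interv (fun s => - g s) t t') as [z [Hz Hgz]].
      + intros s Hs; apply continuity_pt_opp, Hc, Hsub, Hs.
      + destruct (Req_dec t t') as [<-|]; lra.
      + lra.
      + lra.
      + apply (Hnz z (Hsub z Hz)); lra.
    - destruct (Rlt_or_le 0 (g t)) as [|Hneg]; [assumption| exfalso].
      destruct (IVT_interv g t t') as [z [Hz Hgz]].
      + intros s Hs; apply Hc, Hsub, Hs.
      + destruct (Req_dec t t') as [<-|]; lra.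
      + lra.
      + exact Hpos.
      + exact (Hnz z (Hsub z Hz) Hgz). }
  intros t t' Ht Ht'; destruct (Rle_or_lt t t').
  - now apply Hord.
  - symmetry; apply Hord; auto; lra.
Qed.

Lemma peval_continuity (env : R -> nat -> R) P :
  (forall i, continuity (fun t => env t i)) -> continuity (fun t => peval (env t) P).
Proof.
  intros H; induction P; simpl.
  - apply H.
  - apply continuity_const; now intros ? ?.
  - now apply continuity_plus.
  - now apply continuity_mult.
  - now apply continuity_opp.
Qed.

Lemma fholds_stable (env : R -> nat -> R) (I : R -> Prop) F :
  is_interval I -> (forall i, continuity (fun t => env t i)) ->
  (forall P, In P (atoms F) -> sign_stable (fun t => peval (env t) P) I) ->
  forall t t', I t -> I t' -> (fholds (env t) F <-> fholds (env t') F).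
Proof.
  intros HI Henv Hst t t' Ht Ht'; apply fholds_atoms; intros P HP.
  destruct (Hst P HP) as [HZ|HZ].
  - rewrite (HZ t Ht), (HZ t' Ht'); split; tauto.
  - split; [| split; intros H0; contradict H0; auto].
    apply (pos_iff_of_nonvanishing (fun s => peval (env s) P) I); auto.
    intros s _; now apply peval_continuity.
Qed.

Lemma inM_iff x y : inM (x, y) <-> 0 < x * x + y * y.
Proof.
  unfold inM; split; intros H.
  - destruct (Req_dec x 0) as [->|]; [destruct (Req_dec y 0) as [->|]|]; [easy| nra| nra].
  - intros Heq; injection Heq as -> ->; lra.
Qed.

Lemma inM_fst x y : x <> 0 -> inM (x, y).
Proof. intros Hx; apply inM_iff; nra. Qed.

Lemma ev_bounded (f : SM) : exists B, forall p, inM p -> Rabs (ev f p) <= B.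
Proof. exact (proj1 (proj2_sig f)). Qed.

Lemma ev_graph (f : SM) : exists F, forall x y z,
  fholds (env3 x y z) F <-> inM (x, y) /\ z = ev f (x, y).
Proof. exact (proj2 (proj2 (proj2_sig f))). Qed.

Lemma ev_continuity_vertical (f : SM) x : x <> 0 -> continuity (fun t => ev f (x, t)).
Proof.
  intros Hx t; assert (Hc := proj1 (proj2 (proj2_sig f))); unfold ev.
  intros eps Heps; destruct (Hc (x, t) (inM_fst x t Hx) eps Heps) as [d [Hd H]].
  exists d; split; [exact Hd|]; intros t' [_ Ht']; simpl in Ht'; unfold R_dist in *.
  apply H; [now apply inM_fst|]; simpl.
  apply Rabs_def2 in Ht'; nra.
Qed.

Lemma ev_continuity_axis (f : SM) x : x <> 0 -> continuity_pt (fun t => ev f (t, 0)) x.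
Proof.
  intros Hx; assert (Hc := proj1 (proj2 (proj2_sig f))); unfold ev.
  intros eps Heps; destruct (Hc (x, 0) (inM_fst x 0 Hx) eps Heps) as [d [Hd H]].
  assert (Hax : 0 < Rabs x) by now apply Rabs_pos_lt.
  exists (Rmin d (Rabs x)); split; [now apply Rmin_glb_lt|].
  intros t [_ Ht]; simpl in Ht; unfold R_dist in *.
  pose proof (Rmin_l d (Rabs x)); pose proof (Rmin_r d (Rabs x)).
  apply H; simpl.
  - apply inM_fst; intros ->; rewrite Rminus_0_l, Rabs_Ropp in Ht; lra.
  - assert (Htd : Rabs (t - x) < d) by lra; apply Rabs_def2 in Htd; nra.
Qed.

Lemma env3_continuity_x y c i : continuity (fun t => env3 t y c i).
Proof.
  destruct i as [|[|[|i]]]; unfold env3;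
    [apply derivable_continuous, derivable_id| ..]; apply continuity_const; now intros ? ?.
Qed.

Lemma env3_continuity_y x c i : continuity (fun t => env3 x t c i).
Proof.
  destruct i as [|[|[|i]]]; unfold env3;
    [| apply derivable_continuous, derivable_id| ..]; apply continuity_const; now intros ? ?.
Qed.

Lemma beval_at_0 P x : beval P x 0 = ueval (hd [] P) x.
Proof. destruct P as [|p P]; unfold beval; simpl; [reflexivity| ring]. Qed.

Lemma open_interval_is_interval a b : is_interval (fun t => a < t < b).
Proof. intros s t u Hs Hu Ht; lra. Qed.

Lemma peval_axis_sign_stable c P :
  exists d, 0 < d /\ sign_stable (fun x => peval (env3 x 0 c) P) (fun x => 0 < x < d).
Proof.
  destruct (ueval_sign_stable (hd [] (to_bpoly c P))) as [d [Hd [H|H]]];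
    exists d; split; try exact Hd; [left| right]; intros x Hx;
    rewrite <- beval_to_bpoly, beval_at_0; now apply H.
Qed.

Lemma axis_level_stable (f : SM) c : exists d, 0 < d /\ forall x x', 0 < x < d -> 0 < x' < d ->
  (ev f (x, 0) = c <-> ev f (x', 0) = c).
Proof.
  destruct (ev_graph f) as [F HF].
  destruct (common_radius (fun d P => sign_stable (fun x => peval (env3 x 0 c) P)
                                     (fun x => 0 < x < d)) (atoms F)) as [d [Hd Hst]].
  - intros d d' P Hd' [H|H]; [left| right]; intros x Hx; apply H; lra.
  - intros P _; apply peval_axis_sign_stable.
  - exists d; split; [exact Hd|]; intros x x' Hx Hx'.
    assert (Hfh := fholds_stable (fun t => env3 t 0 c) _ F (open_interval_is_interval 0 d)
                     (env3_continuity_x 0 c) Hst x x' Hx Hx').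
    rewrite !HF in Hfh.
    assert (inM (x, 0)) by (apply inM_fst; lra); assert (inM (x', 0)) by (apply inM_fst; lra).
    split; intros Heq; symmetry; apply Hfh; split; auto.
Qed.

Lemma flat_level_stable (g : SM) c : near0 (fun x => forall y y',
  0 < y <= flat x -> 0 < y' <= flat x -> (ev g (x, y) = c <-> ev g (x, y') = c)).
Proof.
  destruct (ev_graph g) as [F HF].
  assert (Hst : near0 (fun x => forall P, In P (atoms F) ->
    sign_stable (fun y => peval (env3 x y c) P) (fun y => 0 < y <= flat x))).
  { apply near0_all; intros P _.
    apply near0_impl with (1 := beval_sign_stable (to_bpoly c P)).
    intros x _ [H|H]; [left| right]; intros y Hy; rewrite <- beval_to_bpoly; now apply H. }
  apply near0_impl with (1 := Hst); intros x Hx HstX y y' Hy Hy'.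
  assert (Hfh := fholds_stable (fun t => env3 x t c) (fun t => 0 < t <= flat x) F
                   ltac:(intros s t u Hs Hu Ht; lra) (env3_continuity_y x c) HstX y y' Hy Hy').
  rewrite !HF in Hfh.
  assert (inM (x, y)) by (apply inM_fst; lra); assert (inM (x, y')) by (apply inM_fst; lra).
  split; intros Heq; symmetry; apply Hfh; split; auto.
Qed.

Lemma axis_trichotomy (f : SM) c :
  near0 (fun x => ev f (x, 0) = c) \/ near0 (fun x => ev f (x, 0) < c) \/
  near0 (fun x => c < ev f (x, 0)).
Proof.
  destruct (axis_level_stable f c) as [d [Hd Hlev]].
  assert (Hx0 : 0 < d / 2 < d) by lra.
  destruct (Req_dec (ev f (d / 2, 0)) c) as [Heq|Hne].
  { left; exists d; split; [exact Hd|]; intros x Hx; now apply (Hlev (d / 2) x). }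
  assert (Hnz : forall x, 0 < x < d -> ev f (x, 0) - c <> 0).
  { intros x Hx H0; apply Hne, (Hlev x); [exact Hx| exact Hx0| lra]. }
  assert (Hsgn : forall x, 0 < x < d -> (0 < ev f (x, 0) - c <-> 0 < ev f (d / 2, 0) - c)).
  { intros x Hx; apply (pos_iff_of_nonvanishing (fun t => ev f (t, 0) - c)
                          _ (open_interval_is_interval 0 d)); auto.
    intros t Ht; apply continuity_pt_minus;
      [apply ev_continuity_axis; lra| apply continuity_pt_const; now intros ? ?]. }
  right; destruct (Rlt_or_le (ev f (d / 2, 0)) c); [left| right];
    exists d; split; try exact Hd; intros x Hx;
    specialize (Hsgn x Hx); specialize (Hnz x Hx); lra.
Qed.

Definition tends (f : SM) (l : R) : Prop :=
  forall eps, 0 < eps -> near0 (fun x => Rabs (ev f (x, 0) - l) < eps).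

Lemma tends_unique (f : SM) a b : tends f a -> tends f b -> a = b.
Proof.
  intros Ha Hb; apply NNPP; intros Hne.
  assert (He : 0 < Rabs (a - b) / 2)
    by (assert (0 < Rabs (a - b)) by (apply Rabs_pos_lt; lra); lra).
  destruct (near0_witness _ (near0_and _ _ (Ha _ He) (Hb _ He))) as [x [_ [H1 H2]]].
  assert (Rabs (a - b) <= Rabs (ev f (x, 0) - a) + Rabs (ev f (x, 0) - b)).
  { replace (a - b) with (- (ev f (x, 0) - a) + (ev f (x, 0) - b)) by ring.
    rewrite <- (Rabs_Ropp (ev f (x, 0) - a)); apply Rabs_triang. }
  lra.
Qed.

Lemma tends_exists (f : SM) : exists l, tends f l.
Proof.
  destruct (ev_bounded f) as [B HB].
  assert (HBx : forall x, 0 < x -> - B <= ev f (x, 0) <= B)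
    by (intros x Hx; apply Rabs_le_between, HB, inM_fst; lra).
  set (S := fun c => near0 (fun x => c < ev f (x, 0))).
  destruct (completeness S) as [l [Hub Hlub]].
  - exists B; intros c Hc; destruct (near0_witness _ Hc) as [x [Hx Hcx]].
    specialize (HBx x Hx); lra.
  - exists (- B - 1); exists 1; split; [lra|]; intros x Hx; specialize (HBx x ltac:(lra)); lra.
  - exists l; intros eps Heps.
    assert (Hlow : near0 (fun x => l - eps < ev f (x, 0))).
    { apply NNPP; intros Hn; assert (Hup : is_upper_bound S (l - eps)).
      { intros c Hc; apply Rnot_lt_le; intros Hlt; apply Hn.
        apply near0_impl with (1 := Hc); intros; lra. }
      specialize (Hlub _ Hup); lra. }
    assert (Hhigh : near0 (fun x => ev f (x, 0) <= l + eps / 2)).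
    { destruct (axis_trichotomy f (l + eps / 2)) as [H|[H|H]].
      - apply near0_impl with (1 := H); intros; lra.
      - apply near0_impl with (1 := H); intros; lra.
      - specialize (Hub _ H); lra. }
    apply near0_impl with (1 := near0_and _ _ Hlow Hhigh); intros x _ [H1 H2].
    apply Rabs_def1; lra.
Qed.

Definition rnormsq : rpoly := PAdd (PMul (PVar 0) (PVar 0)) (PMul (PVar 1) (PVar 1)).

Lemma Sconst_spec c : is_Sstar (fun _ => c).
Proof.
  split; [| split].
  - exists (Rabs c); intros; lra.
  - intros p _ eps Heps; exists 1; split; [lra|]; intros.
    unfold Rminus; rewrite Rplus_opp_r, Rabs_R0; lra.
  - exists (FAnd (FPos rnormsq) (FZero (PAdd (PVar 2) (POpp (PConst c))))).
    intros x y z; simpl; rewrite inM_iff; split; intros [H1 H2]; split; auto; lra.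
Qed.

Definition Sconst (c : R) : SM := exist _ _ (Sconst_spec c).

Lemma ev_Sconst c p : ev (Sconst c) p = c.
Proof. reflexivity. Qed.

Fixpoint rpoly_flip (c : R) (P : rpoly) : rpoly :=
  match P with
  | PVar 2 => PAdd (PConst c) (POpp (PVar 2))
  | PVar i => PVar i
  | PConst r => PConst r
  | PAdd p q => PAdd (rpoly_flip c p) (rpoly_flip c q)
  | PMul p q => PMul (rpoly_flip c p) (rpoly_flip c q)
  | POpp p => POpp (rpoly_flip c p)
  end.

Fixpoint formula_flip (c : R) (F : sa_formula) : sa_formula :=
  match F with
  | FPos p => FPos (rpoly_flip c p)
  | FZero p => FZero (rpoly_flip c p)
  | FAnd F G => FAnd (formula_flip c F) (formula_flip c G)
  | FOr F G => FOr (formula_flip c F) (formula_flip c G)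
  | FNot F => FNot (formula_flip c F)
  end.

Lemma peval_flip c P x y z : peval (env3 x y z) (rpoly_flip c P) = peval (env3 x y (c - z)) P.
Proof. induction P as [[|[|[|i]]]| | | |]; simpl; try reflexivity; congruence. Qed.

Lemma fholds_flip c F x y z :
  fholds (env3 x y z) (formula_flip c F) <-> fholds (env3 x y (c - z)) F.
Proof. induction F; simpl; rewrite ?peval_flip; tauto. Qed.

Lemma Sconst_minus_spec c (f : SM) : is_Sstar (fun p => c - ev f p).
Proof.
  destruct f as [f [[B HB] [Hc [F HF]]]]; unfold ev; simpl; split; [| split].
  - exists (Rabs c + B); intros p Hp; specialize (HB p Hp).
    eapply Rle_trans; [apply Rabs_triang|]; rewrite Rabs_Ropp; lra.
  - intros p Hp eps Heps; destruct (Hc p Hp eps Heps) as [d [Hd H]].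
    exists d; split; [exact Hd|]; intros q Hq Hpq.
    replace (c - f q - (c - f p)) with (- (f q - f p)) by ring; rewrite Rabs_Ropp; auto.
  - exists (formula_flip c F); intros x y z; rewrite fholds_flip, HF.
    split; intros [H1 H2]; split; auto; lra.
Qed.

Definition Sconst_minus (c : R) (f : SM) : SM := exist _ _ (Sconst_minus_spec c f).

Lemma ev_Sconst_minus c f p : ev (Sconst_minus c f) p = c - ev f p.
Proof. reflexivity. Qed.

Lemma sa_continuous_of_continuous (f : R * R -> R) :
  (forall p, inM p -> continuous f p) -> sa_continuous f.
Proof.
  intros H [a b] Hp eps Heps.
  destruct (H (a, b) Hp (ball (f (a, b)) eps) (locally_ball (f (a, b)) (mkposreal eps Heps)))
    as [d Hd].
  exists d; split; [apply cond_pos|]; intros [a' b'] _ Hdist; simpl in Hdist.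
  apply (Hd (a', b')); pose proof (cond_pos d).
  pose proof (Rle_0_sqr (a' - a)); pose proof (Rle_0_sqr (b' - b)); unfold Rsqr in *.
  split; [change (Rabs (a' - a) < d)| change (Rabs (b' - b) < d)];
    rewrite <- (Rabs_pos_eq d) by lra; apply Rsqr_lt_abs_0; unfold Rsqr; nra.
Qed.

Definition sep_fun (p : R * R) : R :=
  5 * (snd p * snd p) / (fst p * fst p + snd p * snd p).

Lemma sep_continuous p : inM p -> continuous sep_fun p.
Proof.
  destruct p as [x y]; rewrite inM_iff; intros Hp.
  assert (Hx : continuous (fun p : R * R => fst p) (x, y)) by apply continuous_fst.
  assert (Hy : continuous (fun p : R * R => snd p) (x, y)) by apply continuous_snd.
  assert (Hyy : continuous (fun p : R * R => snd p * snd p) (x, y))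
    by exact (continuous_mult _ _ _ Hy Hy).
  assert (Hden : continuous (fun p : R * R => fst p * fst p + snd p * snd p) (x, y))
    by exact (@continuous_plus _ R_AbsRing R_NormedModule _ _ _
                (continuous_mult _ _ _ Hx Hx) Hyy).
  assert (Hinv : continuous (fun p : R * R => / (fst p * fst p + snd p * snd p)) (x, y)).
  { apply continuous_comp with (g := Rinv); [exact Hden| apply continuous_Rinv; simpl; lra]. }
  exact (continuous_mult _ _ _ (continuous_mult _ _ _ (continuous_const (5 : R) (x, y)) Hyy)
           Hinv).
Qed.

Lemma sep_spec : is_Sstar sep_fun.
Proof.
  split; [| split].
  - exists 5; intros [x y] Hp; rewrite inM_iff in Hp; unfold sep_fun; simpl.
    rewrite Rabs_pos_eq.
    + apply Rmult_le_reg_r with (x * x + y * y); [exact Hp|].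
      unfold Rdiv; rewrite Rmult_assoc, Rinv_l by lra; nra.
    + apply Rmult_le_pos; [nra| left; apply Rinv_0_lt_compat; lra].
  - apply sa_continuous_of_continuous, sep_continuous.
  - exists (FAnd (FPos rnormsq)
      (FZero (PAdd (PMul (PVar 2) rnormsq) (POpp (PMul (PConst 5) (PMul (PVar 1) (PVar 1))))))).
    intros x y z; simpl; rewrite inM_iff; unfold sep_fun; simpl.
    split; intros [H1 H2]; split; auto.
    + apply Rmult_eq_reg_r with (x * x + y * y); [field_simplify; lra| lra].
    + rewrite H2; field; lra.
Qed.

Definition sep : SM := exist _ _ sep_spec.

Lemma sep_axis x : x <> 0 -> ev sep (x, 0) = 0.
Proof. intros Hx; unfold ev, sep, sep_fun; simpl; field; nra. Qed.

Lemma sep_half_line x : x <> 0 -> ev sep (x, x / 2) = 1.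
Proof. intros Hx; unfold ev, sep, sep_fun; simpl; field; nra. Qed.

(* [val f l]: [f] takes the value [l] at some point of [beta_s^* M]. *)
Section KernelOfValue.
Variable val : SM -> R -> Prop.
Hypothesis val_total : forall f, exists l, val f l.
Hypothesis val_unique : forall f a b, val f a -> val f b -> a = b.
Hypothesis val_const : forall h c, (forall p, inM p -> ev h p = c) -> val h c.
Hypothesis val_add0 : forall f g h, val f 0 -> val g 0 ->
  (forall p, inM p -> ev h p = ev f p + ev g p) -> val h 0.
Hypothesis val_mul0 : forall f g h, val f 0 ->
  (forall p, inM p -> ev h p = ev g p * ev f p) -> val h 0.
Hypothesis val_const_minus : forall f a c, val f a -> val (Sconst_minus c f) (c - a).

(** If an ideal contains [f] with value [l <> 0], it contains [l - f] (of value [0]),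
    hence the unit [l]. *)
Lemma kernel_maximal : is_maximal_ideal (fun f => val f 0).
Proof.
  split; [| split].
  - split; [| split].
    + intros z Hz; now apply val_const.
    + exact val_add0.
    + exact val_mul0.
  - intros u Hu H0; assert (H1 := val_unique _ _ _ H0 (val_const u 1 Hu)); lra.
  - intros J [_ [Jadd Jmul]] Jprop Hsub f Jf; destruct (val_total f) as [l Hl].
    destruct (Req_dec l 0) as [->|Hl0]; [exact Hl| exfalso].
    assert (Hk : val (Sconst_minus l f) 0)
      by (replace 0 with (l - l) by ring; now apply val_const_minus).
    assert (Jl : J (Sconst l)).
    { apply (Jadd f (Sconst_minus l f)); auto.
      intros p _; rewrite ev_Sconst, ev_Sconst_minus; ring. }
    apply (Jprop (Sconst 1)); [reflexivity|].
    apply (Jmul (Sconst l) (Sconst (/ l))); [exact Jl|].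
    intros p _; rewrite !ev_Sconst; field; exact Hl0.
Qed.

End KernelOfValue.

Lemma point_maximal a : inM a -> is_maximal_ideal (fun f => ev f a = 0).
Proof.
  intros Ha; apply (kernel_maximal (fun f l => ev f a = l)).
  - intros f; eauto.
  - intros f l l' -> ->; reflexivity.
  - intros h c Hh; now apply Hh.
  - intros f g h Hf Hg Hh; rewrite Hh, Hf, Hg by exact Ha; ring.
  - intros f g h Hf Hh; rewrite Hh, Hf by exact Ha; ring.
  - intros f l c <-; reflexivity.
Qed.

Definition point (a : R * R) (Ha : inM a) : betaM := exist _ _ (point_maximal a Ha).

Lemma mem_point a Ha f : mem (point a Ha) f <-> ev f a = 0.
Proof. reflexivity. Qed.

Lemma axis_maximal : is_maximal_ideal (fun f => tends f 0).
Proof.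
  apply kernel_maximal.
  - exact tends_exists.
  - exact tends_unique.
  - intros h c Hh eps Heps; exists 1; split; [lra|]; intros x Hx.
    rewrite Hh by (apply inM_fst; lra); unfold Rminus; rewrite Rplus_opp_r, Rabs_R0; lra.
  - intros f g h Hf Hg Hh eps Heps.
    apply near0_impl with (1 := near0_and _ _ (Hf (eps / 2) ltac:(lra)) (Hg (eps / 2) ltac:(lra))).
    intros x Hx [H1 H2]; rewrite Hh by (apply inM_fst; lra); rewrite Rminus_0_r in *.
    eapply Rle_lt_trans; [apply Rabs_triang| lra].
  - intros f g h Hf Hh eps Heps; destruct (ev_bounded g) as [B HB].
    assert (HB0 : 0 <= B) by (eapply Rle_trans; [apply Rabs_pos| apply (HB (1, 0)), inM_fst; lra]).
    apply near0_impl with (1 := Hf (eps / (B + 1)) ltac:(apply Rdiv_lt_0_compat; lra)).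
    intros x Hx H; rewrite Hh by (apply inM_fst; lra); rewrite Rminus_0_r in *.
    rewrite Rabs_mult; specialize (HB (x, 0) ltac:(apply inM_fst; lra)).
    assert (Rabs (ev f (x, 0)) * (B + 1) < eps).
    { apply Rmult_lt_compat_r with (r := B + 1) in H; [|lra].
      unfold Rdiv in H; rewrite Rmult_assoc, Rinv_l in H; lra. }
    pose proof (Rabs_pos (ev f (x, 0))); pose proof (Rabs_pos (ev g (x, 0))); nra.
  - intros f a c H eps Heps; apply near0_impl with (1 := H eps Heps); intros x _ Hx.
    rewrite ev_Sconst_minus; replace (c - ev f (x, 0) - (c - a)) with (- (ev f (x, 0) - a))
      by ring.
    now rewrite Rabs_Ropp.
Qed.

Definition m_axis : betaM := exist _ _ axis_maximal.

Lemma mem_m_axis f : mem m_axis f <-> tends f 0.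
Proof. reflexivity. Qed.

(** If [g] vanishes on the flat curve but tends to [l <> 0] along the axis, then
    for small [x] the level [l / 2] is attained on the segment between [(x, 0)] and
    [(x, flat x)] but not at its endpoint, against [flat_level_stable]. *)
Lemma tends0_of_vanishing_on_flat (g : SM) :
  (forall x, 0 < x < 1 -> ev g (x, flat x) = 0) -> tends g 0.
Proof.
  intros Hg; destruct (tends_exists g) as [l Hl].
  destruct (Req_dec l 0) as [->|Hl0]; [exact Hl| exfalso].
  assert (Hal : 0 < Rabs l) by now apply Rabs_pos_lt.
  destruct (near0_witness _ (near0_and _ _ (near0_and _ _
    (flat_level_stable g (l / 2)) (Hl (Rabs l / 2) ltac:(lra))) (near0_lt 1 Rlt_0_1)))
    as [x [Hx [[Hlev Hnear] Hx1]]].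
  assert (Hgx := Hg x (conj Hx Hx1)); pose proof (flat_pos x).
  set (u := fun t => l * (l / 2 - ev g (x, t))).
  assert (Hu0 : u 0 < 0).
  { unfold u; apply Rabs_def2 in Hnear.
    destruct (Rlt_or_le 0 l); [rewrite Rabs_pos_eq in Hnear| rewrite Rabs_left1 in Hnear];
      lra || nra. }
  assert (Hu1 : 0 < u (flat x)) by (unfold u; rewrite Hgx; nra).
  assert (Hcu : continuity u).
  { unfold u; apply continuity_mult; [apply continuity_const; now intros ? ?|].
    apply continuity_minus; [apply continuity_const; now intros ? ?|].
    apply ev_continuity_vertical; lra. }
  destruct (IVT u 0 (flat x) Hcu (flat_pos x) Hu0 Hu1) as [z [Hz Huz]].
  assert (Hz0 : z <> 0) by (intros ->; lra).
  assert (Hgz : ev g (x, z) = l / 2).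
  { unfold u in Huz; apply Rmult_integral in Huz; destruct Huz; lra. }
  apply (Hlev z (flat x)) in Hgz; [| lra| lra]; lra.
Qed.

Lemma maximal_not_both (m : betaM) f : mem m f -> mem m (Sconst_minus 1 f) -> False.
Proof.
  intros Hf Hf'; destruct (proj2_sig m) as [[_ [Iadd _]] [Iprop _]].
  apply (Iprop (Sconst 1)); [reflexivity|].
  apply (Iadd f (Sconst_minus 1 f)); [exact Hf| exact Hf'|].
  intros p _; rewrite ev_Sconst, ev_Sconst_minus; ring.
Qed.

Lemma betaM_eq (m m' : betaM) : (forall f, mem m f <-> mem m' f) -> m = m'.
Proof.
  destruct m as [I HI], m' as [I' HI']; unfold mem; simpl; intros H.
  assert (I = I') as <-
    by (apply functional_extensionality; intros f; apply propositional_extensionality, H).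
  f_equal; apply proof_irrelevance.
Qed.

Lemma zar_open_Dset k : zar_open (Dset k).
Proof. intros m Hm; exists k; split; [exact Hm| tauto]. Qed.

Definition adherent (m : betaM) (S : R * R -> Prop) : Prop :=
  forall g, Dset g m -> exists a, inM a /\ S a /\ ev g a <> 0.

Lemma mem_of_adherent m S k : adherent m S -> (forall a, S a -> ev k a = 0) -> mem m k.
Proof.
  intros Hadh Hk; apply NNPP; intros Hn.
  destruct (Hadh k Hn) as [a [_ [Ha Hka]]]; exact (Hka (Hk a Ha)).
Qed.

Lemma inverse_at_point (F G : betaM -> betaM) : (forall m, G (F m) = m) -> extends_phi F ->
  forall a Ha b Hb, phi a = b -> G (point b Hb) = point a Ha.
Proof.
  intros HGF Hext a Ha b Hb Hab; rewrite <- (HGF (point a Ha)); f_equal.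
  apply betaM_eq; intros f; rewrite mem_point, (Hext a Ha (point a Ha) (mem_point a Ha)), Hab.
  reflexivity.
Qed.

Lemma adherent_inverse (F G : betaM -> betaM) m (S T : R * R -> Prop) :
  (forall m, G (F m) = m) -> extends_phi F -> zar_continuous G -> adherent m S ->
  (forall b, inM b -> S b -> exists a, inM a /\ T a /\ phi a = b) -> adherent (G m) T.
Proof.
  intros HGF Hext HG Hadh Hpre k Hk.
  destruct (HG (Dset k) (zar_open_Dset k) m Hk) as [g [Hgm Hg]].
  destruct (Hadh g Hgm) as [b [Hb [HSb Hgb]]].
  destruct (Hpre b Hb HSb) as [a [Ha [HTa Hab]]].
  exists a; split; [exact Ha| split; [exact HTa|]].
  specialize (Hg (point b Hb) Hgb); rewrite (inverse_at_point F G HGF Hext a Ha b Hb Hab) in Hg.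
  exact Hg.
Qed.

Lemma m_axis_adherent_axis : adherent m_axis (fun a => exists x, 0 < x /\ a = (x, 0)).
Proof.
  intros g Hg; apply NNPP; intros Hn; apply Hg, mem_m_axis; intros eps Heps.
  exists 1; split; [lra|]; intros x Hx.
  assert (Hgx : ev g (x, 0) = 0).
  { apply NNPP; intros Hgx; apply Hn; exists (x, 0).
    split; [apply inM_fst; lra| split; [exists x; split; [lra| reflexivity]| exact Hgx]]. }
  rewrite Hgx, Rminus_0_r, Rabs_R0; exact Heps.
Qed.

Lemma m_axis_adherent_flat :
  adherent m_axis (fun a => exists x, 0 < x < 1 /\ a = (x, flat x)).
Proof.
  intros g Hg; apply NNPP; intros Hn; apply Hg, mem_m_axis, tends0_of_vanishing_on_flat.
  intros x Hx; apply NNPP; intros Hgx; apply Hn; exists (x, flat x).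
  split; [apply inM_fst; lra| split; [exists x; split; [exact Hx| reflexivity]| exact Hgx]].
Qed.

Lemma phi_axis x : phi (x, 0) = (x, 0).
Proof. unfold phi; destruct (Rle_dec 0 0); [reflexivity| lra]. Qed.

Lemma phi_half_line x : 0 < x -> phi (x, x / 2) = (x, flat x).
Proof.
  intros Hx; unfold phi, flat.
  destruct (Rle_dec (x / 2) 0); [lra|]; destruct (Rle_dec x (x / 2)); [lra|].
  destruct (Rle_dec (x / 2) (x / 2)); [f_equal; field; lra| lra].
Qed.

Theorem mainTheorem15 :
  ~ exists F : betaM -> betaM, zar_homeomorphism F /\ extends_phi F.
Proof.
  intros [F [[G [HGF [_ [_ HG]]]] Hext]].
  assert (Haxis : adherent (G m_axis) (fun a => exists x, 0 < x /\ a = (x, 0))).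
  { apply (adherent_inverse F G m_axis _ _ HGF Hext HG m_axis_adherent_axis).
    intros b Hb [x [Hx ->]]; exists (x, 0).
    split; [exact Hb| split; [exists x; split; [exact Hx| reflexivity]| apply phi_axis]]. }
  assert (Hhalf : adherent (G m_axis) (fun a => exists x, 0 < x /\ a = (x, x / 2))).
  { apply (adherent_inverse F G m_axis _ _ HGF Hext HG m_axis_adherent_flat).
    intros b Hb [x [Hx ->]]; exists (x, x / 2); split; [apply inM_fst; lra|].
    split; [exists x; split; [lra| reflexivity]| apply phi_half_line; lra]. }
  apply (maximal_not_both (G m_axis) sep).
  - apply (mem_of_adherent _ _ _ Haxis); intros a [x [Hx ->]]; apply sep_axis; lra.
  - apply (mem_of_adherent _ _ _ Hhalf); intros a [x [Hx ->]].
    rewrite ev_Sconst_minus, sep_half_line by lra; ring.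
Qed.
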